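(* Let $0<\mu_1<1$, $\lambda_G>0$, set $\mu_2:=\lambda_G$ and $\mu_3:=\frac{\mu_1}{\mu_2(1+2\mu_1)}$, and let $p\ge1$ be an integer. Let $q\le p$ and let $(\mathbf s_i,\mathbf y_i)$, $i=1,\dots,q$, be vectors in $\mathbb{R}^d$ each of which is the output $(\tilde{\mathbf s},\tilde{\mathbf y})$ of the damping procedure $D_{P(I)}D_{LM}$ (with parameters $\mu_1,\mu_2$) applied to some input pair $(\mathbf s,\mathbf y)\neq(0,0)$. Define $H_0:=\lambda_G^{-1}I$ and recursively, with $\rho_i=(\mathbf s_i^\top\mathbf y_i)^{-1}$, $$H_i=(I-\rho_i\mathbf s_i\mathbf y_i^\top)H_{i-1}(I-\rho_i\mathbf y_i\mathbf s_i^\top)+\rho_i\mathbf s_i\mathbf s_i^\top,\quad i=1,\dots,q.$$ Then $\underline\kappa_G I\preceq H_q\preceq\bar\kappa_G I$, where $$\underline\kappa_G:=\Big(\lambda_G+\frac{p}{\mu_3}\Big)^{-1},\qquad \bar\kappa_G:=\lambda_G^{-1}\hat\mu^p+\frac{\hat\mu^p-1}{\hat\mu-1}\cdot\frac1{\mu_2},\qquad \hat\mu:=\Big(1+\frac1{\sqrt{\mu_2\mu_3}}\Big)^2.$$ In particular, the L-BFGS matrices $H_G^l(k)$ built (with memory at most $p$) from such damped pairs are uniformly bounded above and below by positive multiples of the identity, independently of the iteration $k$.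
   Context: $D_{P(I)}D_{LM}$ with parameters $0<\mu_1<1$, $\mu_2>0$ maps $(\mathbf s,\mathbf y)$ to $(\tilde{\mathbf s},\tilde{\mathbf y})$ as follows: $\theta_1:=\frac{(1-\mu_1)\mathbf y^\top\mathbf y/\mu_2}{\mathbf y^\top\mathbf y/\mu_2-\mathbf s^\top\mathbf y}$ if $\mathbf s^\top\mathbf y<\mu_1\mathbf y^\top\mathbf y/\mu_2$ and $\theta_1:=1$ otherwise; $\tilde{\mathbf s}:=\theta_1\mathbf s+(1-\theta_1)\mu_2^{-1}\mathbf y$; $\tilde{\mathbf y}:=\mathbf y+\mu_2\tilde{\mathbf s}$. $\preceq$ denotes the Loewner order on symmetric matrices. *)

From HB Require Import structures.
From mathcomp Require Import all_boot all_order all_algebra.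
Set Implicit Arguments. Unset Strict Implicit. Unset Printing Implicit Defensive.
Import Order.TTheory GRing.Theory Num.Theory.
Local Open Scope ring_scope.

Section Defs.
Variables (R : rcfType) (d : nat).

Definition dotv (u v : 'cV[R]_d) : R := (u^T *m v) 0 0.

Definition loewner_le (A B : 'M[R]_d) : Prop :=
  forall x : 'cV[R]_d, 0 <= (x^T *m (B - A) *m x) 0 0.

Definition damp (mu1 mu2 : R) (s y : 'cV[R]_d) : 'cV[R]_d * 'cV[R]_d :=
  let theta1 :=
    if dotv s y < mu1 * dotv y y / mu2
    then ((1 - mu1) * dotv y y / mu2) / (dotv y y / mu2 - dotv s y)
    else 1 in
  let st := theta1 *: s + ((1 - theta1) / mu2) *: y in
  (st, y + mu2 *: st).

Definition bfgs_upd (H : 'M[R]_d) (s y : 'cV[R]_d) : 'M[R]_d :=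
  let rho := (dotv s y)^-1 in
  (1%:M - rho *: (s *m y^T)) *m H *m (1%:M - rho *: (y *m s^T))
  + rho *: (s *m s^T).

(* H_0 = lamG^-1 I, H_{i+1} = update of H_i with the pair (S i, Y i)
   (pairs indexed from 0, i.e. (S i, Y i) is the paper's (s_{i+1}, y_{i+1})) *)
Fixpoint Hseq (lamG : R) (S Y : nat -> 'cV[R]_d) (i : nat) : 'M[R]_d :=
  match i with
  | 0 => lamG^-1 *: 1%:M
  | i'.+1 => bfgs_upd (Hseq lamG S Y i') (S i') (Y i')
  end.

End Defs.

From HB Require Import structures.
From mathcomp Require Import all_boot all_order all_algebra.
From mathcomp Require Import ring lra.
Set Implicit Arguments. Unset Strict Implicit. Unset Printing Implicit Defensive.
Import Order.TTheory GRing.Theory Num.Theory.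
Local Open Scope ring_scope.

(* Everything is phrased through quadratic forms x |-> x^T H x, so that the
   Loewner order becomes a pointwise comparison with multiples of |x|^2.
   1. The inner product [dotv] is a symmetric positive definite bilinear
      form; in particular Cauchy-Schwarz holds.
   2. The quadratic form of the BFGS update is q_H(z) + rho (s^T x)^2 with
      z = x - rho (s^T x) y.
   3. Every output (s, y) of the damping procedure is a "curvature pair":
      s^T y > 0, mu2 |s|^2 <= s^T y and mu3 |y|^2 <= s^T y.
   4. One update with a curvature pair raises the inverse lower bound by at
      most 1/mu3 and maps an upper bound c to muh * c + 1/mu2.
   5. Iterating from H_0 = lamG^-1 I, the lower bound after q <= p steps is
      lamG + p/mu3, and the upper bound is the p-th term of the affine
      recurrence u -> muh u + 1/mu2, whose closed form is kappa_hi. *)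

Section InnerProduct.
Variables (R : rcfType) (d : nat).
Implicit Types (u v w x : 'cV[R]_d).

Lemma dotvE u v : dotv u v = \sum_i u i 0 * v i 0.
Proof. by rewrite /dotv !mxE; apply: eq_bigr => i _; rewrite !mxE. Qed.

Lemma dotvC u v : dotv u v = dotv v u.
Proof. by rewrite !dotvE; apply: eq_bigr => i _; rewrite mulrC. Qed.

Lemma dotvDl u v w : dotv (u + v) w = dotv u w + dotv v w.
Proof. by rewrite !dotvE -big_split; apply: eq_bigr => i _; rewrite mxE mulrDl. Qed.

Lemma dotvZl a u w : dotv (a *: u) w = a * dotv u w.
Proof. by rewrite !dotvE mulr_sumr; apply: eq_bigr => i _; rewrite mxE mulrA. Qed.

Lemma dotvBl u v w : dotv (u - v) w = dotv u w - dotv v w.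
Proof. by rewrite dotvDl -scaleN1r dotvZl mulN1r. Qed.

Lemma dotvDr u v w : dotv w (u + v) = dotv w u + dotv w v.
Proof. by rewrite !(dotvC w) dotvDl. Qed.

Lemma dotvZr a u w : dotv w (a *: u) = a * dotv w u.
Proof. by rewrite !(dotvC w) dotvZl. Qed.

Lemma dotvBr u v w : dotv w (u - v) = dotv w u - dotv w v.
Proof. by rewrite !(dotvC w) dotvBl. Qed.

Lemma dotv0r u : dotv u 0 = 0.
Proof. by rewrite -(scale0r (0 : 'cV[R]_d)) dotvZr mul0r. Qed.

Lemma dotv_ge0 u : 0 <= dotv u u.
Proof. by rewrite dotvE; apply: sumr_ge0 => i _; rewrite -expr2 sqr_ge0. Qed.

Lemma dotv_eq0 u : dotv u u = 0 -> u = 0.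
Proof.
rewrite dotvE => u0; apply/matrixP => i j; rewrite ord1 mxE.
have sq_ge0 (k : 'I_d) : true -> 0 <= u k 0 * u k 0 by rewrite -expr2 sqr_ge0.
by have /eqP := psumr_eq0P sq_ge0 u0 (i := i) isT; rewrite mulf_eq0 orbb => /eqP.
Qed.

Lemma dotv_expand u c v : dotv (u + c *: v) (u + c *: v) =
  dotv u u + 2 * c * dotv u v + c ^+ 2 * dotv v v.
Proof. rewrite !dotvDl !dotvDr !dotvZl !dotvZr (dotvC v u); ring. Qed.

(* Cauchy-Schwarz, from |(v.v) u - (u.v) v|^2 >= 0 *)
Lemma cauchy_schwarz u v : dotv u v ^+ 2 <= dotv u u * dotv v v.
Proof.
have [v0|vn0] := eqVneq (dotv v v) 0.
  by rewrite (dotv_eq0 v0) dotv0r expr0n /= mulr_ge0 ?dotv_ge0.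
have vv_gt0 : 0 < dotv v v by rewrite lt0r vn0 dotv_ge0.
set w := dotv v v *: u - dotv u v *: v.
have wwE : dotv w w = dotv v v * (dotv v v * dotv u u - dotv u v ^+ 2).
  rewrite !dotvBl !dotvBr !dotvZl !dotvZr (dotvC v u); ring.
have := dotv_ge0 w; rewrite wwE (pmulr_rge0 _ vv_gt0) subr_ge0.
by rewrite mulrC.
Qed.

End InnerProduct.

Section QuadraticForm.
Variables (R : rcfType) (d : nat).
Implicit Types (s x y : 'cV[R]_d) (H : 'M[R]_d).

Definition qform H x : R := (x^T *m H *m x) 0 0.

Lemma qform_scalar (k : R) x : qform (k *: 1%:M) x = k * dotv x x.
Proof. by rewrite /qform -scalemxAr mulmx1 -scalemxAl mxE. Qed.

Lemma loewner_leP (A B : 'M[R]_d) :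
  loewner_le A B <-> forall x, qform A x <= qform B x.
Proof.
rewrite /loewner_le /qform; split => AB x; have := AB x;
by rewrite mulmxBr mulmxBl !mxE subr_ge0.
Qed.

Lemma qform_bfgs_upd H s y x : qform (bfgs_upd H s y) x =
  qform H (x - ((dotv s y)^-1 * dotv s x) *: y)
  + (dotv s y)^-1 * dotv s x ^+ 2.
Proof.
rewrite /qform /bfgs_upd /=; set r := (dotv s y)^-1.
have sxE : s^T *m x = (dotv s x)%:M by rewrite [LHS]mx11_scalar.
have xsE : x^T *m s = (dotv s x)%:M by rewrite [LHS]mx11_scalar dotvC.
have rightE : (1%:M - r *: (y *m s^T)) *m x = x - (r * dotv s x) *: y.
  by rewrite mulmxBl mul1mx -scalemxAl -mulmxA sxE mul_mx_scalar scalerA.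
have leftE : x^T *m (1%:M - r *: (s *m y^T)) = (x - (r * dotv s x) *: y)^T.
  rewrite -rightE trmx_mul; congr (_ *m _).
  by rewrite [RHS]linearB /= trmx1 [in RHS]linearZ /= trmx_mul trmxK.
rewrite (mulmxDr x^T) (mulmxDl _ _ x) mxE !mulmxA leftE -(mulmxA _ _ x) rightE.
congr (_ + _).
rewrite -scalemxAr -scalemxAl mxE (mulmxA x^T) xsE mul_scalar_mx -scalemxAl sxE.
by rewrite !mxE eqxx mulr1n expr2.
Qed.

Lemma rank_one_defect_bound (r t : R) s y x : 0 <= t ->
  r ^+ 2 * dotv s s * dotv y y <= t ^+ 2 ->
  dotv (x - (r * dotv s x) *: y) (x - (r * dotv s x) *: y)
    <= (1 + t) ^+ 2 * dotv x x.
Proof.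
move=> t_ge0 rsy_le; set a := dotv s x.
have x0 := dotv_ge0 x; have y0 := dotv_ge0 y; have s0 := dotv_ge0 s.
have sx_le : a ^+ 2 <= dotv s s * dotv x x by apply: cauchy_schwarz.
have xy_le : dotv x y ^+ 2 <= dotv x x * dotv y y by apply: cauchy_schwarz.
have coef_le : r ^+ 2 * dotv s s * dotv y y * dotv x x <= t ^+ 2 * dotv x x.
  by rewrite ler_wpM2r.
have sq_term : (r * a) ^+ 2 * dotv y y <= t ^+ 2 * dotv x x.
  apply: le_trans coef_le.
  have -> : r ^+ 2 * dotv s s * dotv y y * dotv x x =
    r ^+ 2 * ((dotv s s * dotv x x) * dotv y y) by ring.
  by rewrite exprMn -[X in X <= _]mulrA ler_wpM2l ?sqr_ge0 // ler_wpM2r.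
have cross_term : - (r * a * dotv x y) <= t * dotv x x.
  have : (r * a * dotv x y) ^+ 2 <= (t * dotv x x) ^+ 2.
    apply: (@le_trans _ _ (r ^+ 2 * dotv s s * dotv y y * dotv x x ^+ 2)).
      have -> : (r * a * dotv x y) ^+ 2 = r ^+ 2 * (a ^+ 2 * dotv x y ^+ 2) by ring.
      have -> : r ^+ 2 * dotv s s * dotv y y * dotv x x ^+ 2 =
        r ^+ 2 * ((dotv s s * dotv x x) * (dotv x x * dotv y y)) by ring.
      by rewrite ler_wpM2l ?sqr_ge0 // ler_pM ?sqr_ge0.
    by rewrite exprMn ler_wpM2r ?sqr_ge0.
  have : 0 <= t * dotv x x by rewrite mulr_ge0.
  nra.
rewrite -scaleNr dotv_expand sqrrN; lra.
Qed.

End QuadraticForm.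

Section Damping.
Variables (R : rcfType) (d : nat) (mu1 mu2 : R).
Implicit Types (s y : 'cV[R]_d).

Definition mu3_of : R := mu1 / (mu2 * (1 + 2 * mu1)).

Definition curvature_pair (mu3 : R) s y : Prop :=
  [/\ 0 < dotv s y, mu2 * dotv s s <= dotv s y & mu3 * dotv y y <= dotv s y].

Lemma lm_shift_curvature s y : 0 < mu1 -> 0 < mu2 ->
  mu1 * dotv y y <= mu2 * dotv s y -> 0 < dotv s y + mu2 * dotv s s ->
  curvature_pair mu3_of s (y + mu2 *: s).
Proof.
move=> mu1_gt0 mu2_gt0 powell pos; rewrite /curvature_pair /mu3_of.
have -> : dotv s (y + mu2 *: s) = dotv s y + mu2 * dotv s s.
  by rewrite dotvDr dotvZr.
rewrite dotv_expand (dotvC y s).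
have y0 := dotv_ge0 y; have s0 := dotv_ge0 s.
have sy_ge0 : 0 <= dotv s y.
  by rewrite -(pmulr_rge0 _ mu2_gt0); apply: le_trans powell; rewrite mulr_ge0 // ltW.
split => //; first by lra.
rewrite mulrAC ler_pdivrMr; last by rewrite mulr_gt0 //; lra.
have : 0 <= mu2 ^+ 2 * dotv s s * (1 + mu1).
  by rewrite !mulr_ge0 ?exprn_ge0 //; lra.
nra.
Qed.

Lemma damped_branch_yy_gt0 s y : 0 < mu2 ->
  dotv s y < mu1 * dotv y y / mu2 -> 0 < dotv y y.
Proof.
move=> mu2_gt0 damped; rewrite lt0r dotv_ge0 andbT; apply/eqP => /dotv_eq0 y0.
by move: damped; rewrite y0 !dotv0r mulr0 mul0r ltxx.
Qed.

Lemma powell_inner s y (theta := ((1 - mu1) * dotv y y / mu2)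
                                   / (dotv y y / mu2 - dotv s y)) :
  0 < mu1 -> mu1 < 1 -> 0 < mu2 -> dotv s y < mu1 * dotv y y / mu2 ->
  dotv (theta *: s + ((1 - theta) / mu2) *: y) y = mu1 * dotv y y / mu2.
Proof.
move=> mu1_gt0 mu1_lt1 mu2_gt0 damped.
have yy_gt0 := damped_branch_yy_gt0 mu2_gt0 damped.
have gap_gt0 : 0 < dotv y y - dotv s y * mu2.
  rewrite subr_gt0 -ltr_pdivlMr //; apply: lt_le_trans damped _.
  by rewrite ler_pM2r ?invr_gt0 //; nra.
by rewrite dotvDl !dotvZl /theta; field; rewrite !gt_eqF // mulNr.
Qed.

Lemma undamped_branch_pos s y : 0 < mu1 -> 0 < mu2 ->
  mu1 * dotv y y <= mu2 * dotv s y -> (s, y) != (0, 0) ->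
  0 < dotv s y + mu2 * dotv s s.
Proof.
move=> mu1_gt0 mu2_gt0 powell nz.
have y0 := dotv_ge0 y; have s0 := dotv_ge0 s.
have sy_ge0 : 0 <= dotv s y.
  by rewrite -(pmulr_rge0 _ mu2_gt0); apply: le_trans powell; rewrite mulr_ge0 // ltW.
have [ss0|ssn0] := eqVneq (dotv s s) 0; last first.
  have ss_gt0 : 0 < dotv s s by rewrite lt0r ssn0.
  nra.
have s_eq0 := dotv_eq0 ss0.
move: powell nz; rewrite s_eq0 dotvC dotv0r mulr0 => powell.
have : dotv y y = 0 by apply/eqP; rewrite eq_le y0 andbT -(pmulr_rle0 _ mu1_gt0).
by move/dotv_eq0 ->; rewrite eqxx.
Qed.

Lemma damp_curvature s y st yt : 0 < mu1 -> mu1 < 1 -> 0 < mu2 ->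
  (s, y) != (0, 0) -> damp mu1 mu2 s y = (st, yt) -> curvature_pair mu3_of st yt.
Proof.
move=> mu1_gt0 mu1_lt1 mu2_gt0 nz; rewrite /damp /=.
case: ifP => damped [<- <-].
  have inner := powell_inner mu1_gt0 mu1_lt1 mu2_gt0 damped.
  have inner_gt0 : 0 < mu1 * dotv y y / mu2.
    by rewrite !mulr_gt0 ?invr_gt0 ?(damped_branch_yy_gt0 mu2_gt0 damped).
  apply: lm_shift_curvature => //; rewrite inner.
    by rewrite [X in _ <= X]mulrC divfK ?gt_eqF.
  set st' := (_ *: s + _ *: y); have := dotv_ge0 st'.
  nra.
rewrite subrr mul0r scale0r addr0 scale1r.
move/negbT: damped; rewrite -leNgt ler_pdivrMr // [_ * mu2]mulrC => powell.
by apply: lm_shift_curvature => //; apply: undamped_branch_pos.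
Qed.

End Damping.

Section BFGSUpdate.
Variables (R : rcfType) (d : nat).
Implicit Types (s x y z : 'cV[R]_d) (H : 'M[R]_d).

Lemma weighted_cauchy_schwarz (L r a : R) z y : 0 < r ->
  L * dotv (z + (r * a) *: y) (z + (r * a) *: y)
    <= (L + r * dotv y y) * (dotv z z + L * r * a ^+ 2).
Proof.
move=> r_gt0; rewrite dotv_expand -subr_ge0.
have -> : (L + r * dotv y y) * (dotv z z + L * r * a ^+ 2)
    - L * (dotv z z + 2 * (r * a) * dotv z y + (r * a) ^+ 2 * dotv y y)
  = r * ((L * a - dotv z y) ^+ 2 + (dotv z z * dotv y y - dotv z y ^+ 2)).
  by ring.
apply: mulr_ge0; first exact: ltW.
by rewrite addr_ge0 ?sqr_ge0 // subr_ge0 cauchy_schwarz.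
Qed.

Lemma bfgs_upd_lower H s y (L mu3 : R) : 0 < L -> 0 < mu3 -> 0 < dotv s y ->
  mu3 * dotv y y <= dotv s y ->
  (forall z, dotv z z <= L * qform H z) ->
  forall x, dotv x x <= (L + mu3^-1) * qform (bfgs_upd H s y) x.
Proof.
move=> L_gt0 mu3_gt0 sy_gt0 hy lowH x; rewrite qform_bfgs_upd.
set r := (dotv s y)^-1; set a := dotv s x; set z := x - (r * a) *: y.
have r_gt0 : 0 < r by rewrite invr_gt0.
have Q_ge0 : 0 <= qform H z.
  by rewrite -(pmulr_rge0 _ L_gt0); apply: le_trans (lowH z); apply: dotv_ge0.
have ryy_le : r * dotv y y <= mu3^-1.
  rewrite -(ler_pM2l mu3_gt0) mulrCA mulrV ?unitf_gt0 //.
  by rewrite -(mulVf (lt0r_neq0 sy_gt0)) ler_pM2l.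
have ra2_ge0 : 0 <= r * a ^+ 2 by rewrite mulr_ge0 ?sqr_ge0 ?ltW.
have xE : x = z + (r * a) *: y by rewrite subrK.
rewrite -(ler_pM2l L_gt0) [in dotv x x]xE.
apply: le_trans (weighted_cauchy_schwarz L a z y r_gt0) _.
have ryy_ge0 : 0 <= r * dotv y y by rewrite mulr_ge0 ?dotv_ge0 ?ltW.
rewrite [X in _ <= X]mulrCA; apply: ler_pM.
- by rewrite addr_ge0 // ltW.
- by rewrite addr_ge0 ?dotv_ge0 // -mulrA mulr_ge0 // ltW.
- by rewrite lerD2l.
- by rewrite mulrDr [L * (r * _)]mulrA lerD2r lowH.
Qed.

Lemma curvature_pair_ratio (mu2 mu3 t : R) s y : 0 < mu2 -> 0 < mu3 ->
  mu2 * mu3 * t ^+ 2 = 1 -> curvature_pair mu2 mu3 s y ->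
  (dotv s y)^-1 ^+ 2 * dotv s s * dotv y y <= t ^+ 2.
Proof.
move=> mu2_gt0 mu3_gt0 t2E [sy_gt0 hs hy]; set r := (dotv s y)^-1.
have rsy : r * dotv s y = 1 by rewrite mulVf ?gt_eqF.
have -> : r ^+ 2 * dotv s s * dotv y y
    = (t ^+ 2 * r ^+ 2) * ((mu2 * dotv s s) * (mu3 * dotv y y)).
  by rewrite -[LHS]mul1r -t2E; ring.
have tE : t ^+ 2 = (t ^+ 2 * r ^+ 2) * (dotv s y * dotv s y).
  by rewrite -mulrA -expr2 -exprMn rsy expr1n mulr1.
rewrite [leRHS]tE; apply: ler_wpM2l; first exact: mulr_ge0 (sqr_ge0 t) (sqr_ge0 r).
by apply: ler_pM; rewrite // mulr_ge0 ?dotv_ge0 // ltW.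
Qed.

Lemma bfgs_upd_upper H s y (c mu2 mu3 t : R) : 0 <= c -> 0 < mu2 -> 0 < mu3 ->
  0 <= t -> mu2 * mu3 * t ^+ 2 = 1 -> curvature_pair mu2 mu3 s y ->
  (forall z, qform H z <= c * dotv z z) ->
  forall x, qform (bfgs_upd H s y) x <= ((1 + t) ^+ 2 * c + mu2^-1) * dotv x x.
Proof.
move=> c_ge0 mu2_gt0 mu3_gt0 t_ge0 t2E curv upH x; rewrite qform_bfgs_upd.
have [sy_gt0 hs _] := curv; set r := (dotv s y)^-1; set a := dotv s x.
have r_gt0 : 0 < r by rewrite invr_gt0.
have proj_le := rank_one_defect_bound x t_ge0
  (curvature_pair_ratio mu2_gt0 mu3_gt0 t2E curv).
have ra2_le : r * a ^+ 2 <= mu2^-1 * dotv x x.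
  apply: (@le_trans _ _ (r * (dotv s s * dotv x x))).
    by rewrite ler_wpM2l ?cauchy_schwarz // ltW.
  rewrite mulrA ler_wpM2r ?dotv_ge0 // -(ler_pM2l mu2_gt0) mulrV ?unitf_gt0 //.
  by rewrite mulrCA -(mulVf (lt0r_neq0 sy_gt0)) ler_pM2l.
rewrite mulrDl -mulrA lerD //; apply: le_trans (upH _) _.
by rewrite mulrCA ler_wpM2l.
Qed.

End BFGSUpdate.

Fixpoint affine_iter (R : pzSemiRingType) (m b u0 : R) (n : nat) : R :=
  if n is n'.+1 then m * affine_iter m b u0 n' + b else u0.

Lemma affine_iter_ge0 (R : numDomainType) (m b u0 : R) n :
  0 <= m -> 0 <= b -> 0 <= u0 -> 0 <= affine_iter m b u0 n.
Proof. by move=> m_ge0 b_ge0 u0_ge0; elim: n => //= n IH; rewrite addr_ge0 ?mulr_ge0. Qed.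

Lemma affine_iter_mono (R : numDomainType) (m b u0 : R) i j :
  1 <= m -> 0 <= b -> 0 <= u0 -> (i <= j)%N ->
  affine_iter m b u0 i <= affine_iter m b u0 j.
Proof.
move=> m_ge1 b_ge0 u0_ge0 /subnKC <-; elim: (j - i)%N => [|k IH].
  by rewrite addn0.
rewrite addnS /=; apply: le_trans IH _.
have u_ge0 := affine_iter_ge0 (i + k) (le_trans ler01 m_ge1) b_ge0 u0_ge0.
by rewrite -[leLHS]addr0 lerD // ler_peMl.
Qed.

Lemma affine_iter_closed (R : fieldType) (m b u0 : R) n : m != 1 ->
  affine_iter m b u0 n = u0 * m ^+ n + (m ^+ n - 1) / (m - 1) * b.
Proof.
move=> m_neq1; have m1_neq0 : m - 1 != 0 by rewrite subr_eq0.
elim: n => [|n IH] /=; first by rewrite expr0 subrr !mul0r addr0 mulr1.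
by rewrite IH exprS; field.
Qed.

Section LBFGSBounds.
Variables (R : rcfType) (d : nat) (lamG mu2 mu3 t : R).
Variables (S Y : nat -> 'cV[R]_d) (q : nat).
Hypotheses (lamG_gt0 : 0 < lamG) (mu2_gt0 : 0 < mu2) (mu3_gt0 : 0 < mu3).
Hypotheses (t_ge0 : 0 <= t) (t2E : mu2 * mu3 * t ^+ 2 = 1).
Hypothesis curv : forall i, (i < q)%N -> curvature_pair mu2 mu3 (S i) (Y i).

(* each update adds at most 1/mu3 to the inverse lower bound *)
Lemma Hseq_lower i : (i <= q)%N ->
  forall x, dotv x x <= (lamG + i%:R / mu3) * qform (Hseq lamG S Y i) x.
Proof.
elim: i => [|i IH] lt_iq x /=.
  by rewrite qform_scalar mul0r addr0 mulrA mulfV ?gt_eqF // mul1r.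
have [sy_gt0 _ hy] := curv lt_iq.
have -> : lamG + i.+1%:R / mu3 = (lamG + i%:R / mu3) + mu3^-1.
  by rewrite -natr1 mulrDl mul1r addrA.
apply: bfgs_upd_lower => //; last by move=> z; apply: IH; apply: ltnW.
by rewrite ltr_wpDr // divr_ge0 // ltW.
Qed.

(* each update maps an upper bound c to (1 + t)^2 c + 1/mu2 *)
Lemma Hseq_upper i : (i <= q)%N -> forall x,
  qform (Hseq lamG S Y i) x
    <= affine_iter ((1 + t) ^+ 2) mu2^-1 lamG^-1 i * dotv x x.
Proof.
elim: i => [|i IH] lt_iq x /=; first by rewrite qform_scalar.
have c_ge0 : 0 <= affine_iter ((1 + t) ^+ 2) mu2^-1 lamG^-1 i.
  by apply: affine_iter_ge0; rewrite ?sqr_ge0 ?invr_ge0 ?ltW.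
exact: bfgs_upd_upper c_ge0 mu2_gt0 mu3_gt0 t_ge0 t2E (curv lt_iq)
  (IH (ltnW lt_iq)) x.
Qed.

Lemma Hseq_lower_bound p : (q <= p)%N ->
  forall x, (lamG + p%:R / mu3)^-1 * dotv x x <= qform (Hseq lamG S Y q) x.
Proof.
move=> q_le_p x; have lowq := Hseq_lower (leqnn q) x.
have Lq_gt0 : 0 < lamG + q%:R / mu3 by rewrite ltr_wpDr // divr_ge0 // ltW.
have Lq_le : lamG + q%:R / mu3 <= lamG + p%:R / mu3.
  by rewrite lerD2l ler_pM2r ?invr_gt0 // ler_nat.
have Q_ge0 : 0 <= qform (Hseq lamG S Y q) x.
  by rewrite -(pmulr_rge0 _ Lq_gt0); apply: le_trans (dotv_ge0 x) lowq.
rewrite ler_pdivrMl; last exact: lt_le_trans Lq_le.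
by apply: le_trans lowq _; rewrite ler_wpM2r.
Qed.

Lemma Hseq_upper_bound p : (q <= p)%N -> forall x,
  qform (Hseq lamG S Y q) x
    <= affine_iter ((1 + t) ^+ 2) mu2^-1 lamG^-1 p * dotv x x.
Proof.
move=> q_le_p x; apply: le_trans (Hseq_upper (leqnn q) x) _.
rewrite ler_wpM2r ?dotv_ge0 //; apply: affine_iter_mono q_le_p.
- by rewrite exprn_ege1 // lerDl.
- by rewrite invr_ge0 ltW.
- by rewrite invr_ge0 ltW.
Qed.

End LBFGSBounds.

Theorem lemma3 (R : rcfType) (d : nat) (mu1 lamG : R) (p q : nat)
  (S Y : nat -> 'cV[R]_d) :
  0 < mu1 -> mu1 < 1 -> 0 < lamG -> (1 <= p)%N -> (q <= p)%N ->
  (forall i, (i < q)%N ->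
     exists s y : 'cV[R]_d, (s, y) != (0, 0) /\ damp mu1 lamG s y = (S i, Y i)) ->
  let mu2 := lamG in
  let mu3 := mu1 / (mu2 * (1 + 2 * mu1)) in
  let muh := (1 + (Num.sqrt (mu2 * mu3))^-1) ^+ 2 in
  let kappa_lo := (lamG + p%:R / mu3)^-1 in
  let kappa_hi := lamG^-1 * muh ^+ p + (muh ^+ p - 1) / (muh - 1) * mu2^-1 in
  loewner_le (kappa_lo *: 1%:M) (Hseq lamG S Y q) /\
  loewner_le (Hseq lamG S Y q) (kappa_hi *: 1%:M).
Proof.
move=> mu1_gt0 mu1_lt1 lamG_gt0 _ q_le_p damped mu2 mu3 muh kappa_lo kappa_hi.
have mu3_gt0 : 0 < mu3 by rewrite divr_gt0 // mulr_gt0 //; lra.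
have curv i : (i < q)%N -> curvature_pair mu2 mu3 (S i) (Y i).
  by move=> /damped [s [y [nz sy_eq]]]; apply: damp_curvature sy_eq.
set t := (Num.sqrt (mu2 * mu3))^-1.
have mu23_gt0 : 0 < mu2 * mu3 by rewrite mulr_gt0.
have t_gt0 : 0 < t by rewrite invr_gt0 sqrtr_gt0.
have t2E : mu2 * mu3 * t ^+ 2 = 1.
  by rewrite exprVn sqr_sqrtr ?divff ?gt_eqF // ltW.
have muh_neq1 : muh != 1.
  by rewrite gt_eqF // exprn_egt1 // ltrDl.
split; apply/loewner_leP => x; rewrite qform_scalar.
  exact: (Hseq_lower_bound lamG_gt0 mu3_gt0 curv q_le_p x).
rewrite /kappa_hi -affine_iter_closed //.
exact: (Hseq_upper_bound lamG_gt0 lamG_gt0 mu3_gt0 (ltW t_gt0) t2E curv q_le_p x).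
Qed.
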